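(* Let $l,m$ be positive integers with $m>l\ge5$ and $m>\mathcal{L}$, let $\boldsymbol\sigma\in\mathrm{ir}(l)$, let $t$ be a positive integer with $2^t\le M$, let $\zeta:\mathbb{F}_{2^t}\to\mathcal{B}^m_{\boldsymbol\sigma}$ be injective, let $N=2^t-1$, and let $C\subseteq\mathbb{F}_{2^t}^N$ be an MDS code of length $N$, dimension $N-4$ and minimum Hamming distance $5$. Let $$\mathcal{C}_{MDS}=\{\zeta(c_1)\boldsymbol\sigma\zeta(c_2)\boldsymbol\sigma\cdots\boldsymbol\sigma\zeta(c_N):\ (c_1,\dots,c_N)\in C\}.$$ Then $\mathcal{C}_{MDS}$ corrects any number of $\le3$-TDs and at most one substitution: for any two distinct $\mathbf{c}_1,\mathbf{c}_2\in\mathcal{C}_{MDS}$ we have $D^{*,\le1}(\mathbf{c}_1)\cap D^{*,\le1}(\mathbf{c}_2)=\varnothing$; indeed every codeword $\mathbf{x}$ can be recovered from $R(\mathbf{y})$ for any $\mathbf{y}\in D^{*,\le1}(\mathbf{x})$.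
   Context: $\Sigma_q=\{0,\dots,q-1\}$, $q\ge3$. A tandem duplication of length $k$ transforms $\mathbf{u}\mathbf{v}\mathbf{w}$ with $|\mathbf{v}|=k$ into $\mathbf{u}\mathbf{v}\mathbf{v}\mathbf{w}$; a $\le3$-TD is one of length $1,2$ or $3$. $D^*(\mathbf{x})$ is the set of strings obtainable from $\mathbf{x}$ by finitely many (possibly zero) $\le3$-TDs. A string is irreducible if it has no substring $\mathbf{a}\mathbf{a}$ with $1\le|\mathbf{a}|\le3$; $\mathrm{ir}(n)$ is the set of irreducible strings of length $n$. $R(\mathbf{x})$ denotes the unique irreducible $\mathbf{r}$ with $\mathbf{x}\in D^*(\mathbf{r})$. A substitution replaces one symbol by a different symbol of $\Sigma_q$. $D^{*,1}(\mathbf{x})$ is the set of strings obtainable from $\mathbf{x}$ by any number of $\le3$-TDs and exactly one substitution in any order, and $D^{*,\le1}(\mathbf{x})=D^*(\mathbf{x})\cup D^{*,1}(\mathbf{x})$. $\mathcal{L}$ is the smallest integer such that for every alphabet, every $\mathbf{x}$ and every $\mathbf{x}''\in D^{*,1}(\mathbf{x})$, $R(\mathbf{x}'')$ can be obtained from $R(\mathbf{x})$ by deleting a substring of length at most $\mathcal{L}$ and inserting a substring of length at most $\mathcal{L}$ in the same position (it is known that $\mathcal{L}\le17$). For $\boldsymbol\sigma\in\mathrm{ir}(l)$, $\mathcal{B}^m_{\boldsymbol\sigma}$ denotes the set of strings $B\in\Sigma_q^m$ such that $\boldsymbol\sigma B\boldsymbol\sigma\in\mathrm{ir}(m+2l)$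 and $\boldsymbol\sigma B\boldsymbol\sigma$ contains exactly two occurrences of $\boldsymbol\sigma$ as a substring; $M=M^{(m)}_{\boldsymbol\sigma}=|\mathcal{B}^m_{\boldsymbol\sigma}|$. *)

From HB Require Import structures.
From mathcomp Require Import all_boot all_order all_algebra vector.
From mathcomp Require Import boolp.
Set Implicit Arguments. Unset Strict Implicit. Unset Printing Implicit Defensive.

Section Strings.
Variable T : eqType.

Definition td (x y : seq T) : Prop :=
  exists u v w : seq T, 1 <= size v <= 3 /\ x = u ++ v ++ w /\ y = u ++ v ++ v ++ w.

Inductive Dstar (x : seq T) : seq T -> Prop :=
| Dstar_refl : Dstar x x
| Dstar_step y z : Dstar x y -> td y z -> Dstar x z.

Definition irreducible (s : seq T) : Prop :=
  ~ exists u a w : seq T, 1 <= size a <= 3 /\ s = u ++ a ++ a ++ w.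

(* r is the (known to be unique) irreducible root R(x) of x *)
Definition is_root (r x : seq T) : Prop := irreducible r /\ Dstar r x.

Definition subst1 (x y : seq T) : Prop :=
  exists (u w : seq T) (a b : T), a != b /\ x = u ++ a :: w /\ y = u ++ b :: w.

Definition Dstar1 (x y : seq T) : Prop :=
  exists a b, Dstar x a /\ subst1 a b /\ Dstar b y.

Definition Dstar_le1 (x y : seq T) : Prop := Dstar x y \/ Dstar1 x y.

Definition occ (sigma s : seq T) : nat :=
  count (fun i => take (size sigma) (drop i s) == sigma) (iota 0 (size s - size sigma).+1).

End Strings.

Definition L_prop (L : nat) : Prop :=
  forall (q : nat) (x x'' : seq 'I_q), Dstar1 x x'' ->
  forall r r'', is_root r x -> is_root r'' x'' ->
  exists u v w z : seq 'I_q,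
    r = u ++ v ++ w /\ r'' = u ++ z ++ w /\ size v <= L /\ size z <= L.

Definition is_Lcal (L : nat) : Prop := L_prop L /\ forall L', L_prop L' -> L <= L'.

Definition inB (q : nat) (sigma : seq 'I_q) (m : nat) (B : m.-tuple 'I_q) : Prop :=
  irreducible (sigma ++ tval B ++ sigma) /\ occ sigma (sigma ++ tval B ++ sigma) = 2.

Definition inBb (q : nat) (sigma : seq 'I_q) (m : nat) (B : m.-tuple 'I_q) : bool :=
  `[< inB sigma B >].

Definition Mcard (q : nat) (sigma : seq 'I_q) (m : nat) : nat :=
  #|[set B : m.-tuple 'I_q | inBb sigma B]|.

Definition concat_sep (T : Type) (sep : seq T) (l : seq (seq T)) : seq T :=
  match l with
  | [::] => [::]
  | b :: l' => b ++ flatten [seq sep ++ b' | b' <- l']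
  end.

Definition hamming (F : eqType) (N : nat) (c d : 'rV[F]_N) : nat :=
  #|[set i : 'I_N | c ord0 i != d ord0 i]|.

Definition CMDS (q : nat) (sigma : seq 'I_q) (m : nat) (F : finFieldType) (N : nat)
  (zeta : F -> m.-tuple 'I_q) (C : {vspace 'rV[F]_N}) (x : seq 'I_q) : Prop :=
  exists2 c : 'rV[F]_N, c \in C &
    x = concat_sep sigma [seq tval (zeta (c ord0 i)) | i <- enum 'I_N].

From HB Require Import structures.
From mathcomp Require Import all_boot all_order all_algebra vector.
From mathcomp Require Import zify.
From Stdlib Require Import Classical.
Set Implicit Arguments. Unset Strict Implicit. Unset Printing Implicit Defensive.

(* A codeword x = ζ(c_1) σ ζ(c_2) σ ... σ ζ(c_N) is irreducible, and its only
   occurrences of σ are its N-1 separators; both facts follow from the two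
   defining properties of B^m_σ.  Being irreducible, x is its own root, so the
   defining property of L says that the root r of any y ∈ D^{*,<=1}(x) arises
   from x by replacing a window V by a window Z with |V|,|Z| <= L < m (a pure
   duplication descendant is first completed by one harmless substitution).
   If two codewords x1, x2 have descendants with a common root r, comparing
   their windows shows that x1 and x2 differ inside at most four blocks:
   either the windows are close, or a whole separator of x2 lies between them;
   that separator reappears in x1, hence sits at a separator position of x1,
   which forces the first window to preserve length.  Therefore the underlying
   MDS codewords are at Hamming distance <= 4 < 5 and coincide.  Disjointness
   of the error balls follows because every string has a root. *)

Section Strings.
Variable T : eqType.
Implicit Types (x y r s t u w U V W Z : seq T).

Lemma nth_catR (x0 : T) s1 s2 k : nth x0 (s1 ++ s2) (size s1 + k) = nth x0 s2 k.
Proof. by rewrite nth_cat ltnNge leq_addr /= addKn. Qed.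

Lemma take_drop_nth (x0 : T) y t o :
  o + size t <= size y -> (forall k, k < size t -> nth x0 y (o + k) = nth x0 t k) ->
  take (size t) (drop o y) = t.
Proof.
move=> Hs Hn; apply: (@eq_from_nth _ x0).
  rewrite size_take size_drop; case: ifP => Hc; lia.
move=> k; rewrite size_take size_drop => Hk.
have Hk' : k < size t by move: Hk; case: ifP => Hc; lia.
by rewrite nth_take // nth_drop Hn.
Qed.

Lemma split_at_nth (x0 : T) y t o :
  o + size t <= size y -> (forall k, k < size t -> nth x0 y (o + k) = nth x0 t k) ->
  y = take o y ++ t ++ drop (o + size t) y.
Proof.
move=> Hs Hn; have Ht := take_drop_nth Hs Hn.
by rewrite -{1}(cat_take_drop o y) -{1}(cat_take_drop (size t) (drop o y)) Ht drop_drop addnC.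
Qed.

Lemma Dstar_trans x y z : Dstar x y -> Dstar y z -> Dstar x z.
Proof. by move=> Hxy; elim=> // y' z' _ IH Htd; apply: Dstar_step IH Htd. Qed.

Lemma root_exists y : exists r, is_root r y.
Proof.
have [n Hn] : exists n, size y < n by exists (size y).+1.
elim: n y Hn => [|n IH] y Hy; first by [].
case: (classic (irreducible y)) => Hirr.
  by exists y; split => //; apply: Dstar_refl.
have [u [a [w [Ha Hy']]]] := NNPP _ Hirr.
have Hs : size (u ++ a ++ w) < n by move: Hy; rewrite Hy' !size_cat; lia.
have [r [Hr1 Hr2]] := IH _ Hs.
exists r; split => //; apply: Dstar_step Hr2 _.
by exists u, a, w; split.
Qed.

Definition two_letters s := exists a b, [/\ a \in s, b \in s & a != b].

Lemma irreducible_two_letters s : irreducible s -> 1 < size s -> two_letters s.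
Proof.
case: s => [|a [|b w]] Hirr // _.
exists a, b; split; rewrite ?inE ?eqxx ?orbT //.
apply/negP => /eqP Eab; apply: Hirr; exists [::], [:: a], w; split => //.
by rewrite Eab.
Qed.

(* Duplications never remove letters. *)
Lemma two_letters_Dstar x y : Dstar x y -> two_letters x -> two_letters y.
Proof.
have sub_mem v u w a : a \in u ++ v ++ w -> a \in u ++ v ++ v ++ w.
  by rewrite !mem_cat => /or3P [] ->; rewrite ?orbT.
elim=> // y' z' _ IH [u [v [w [_ [Ey ->]]]]] /IH [a [b [Ha Hb Hab]]].
by exists a, b; split => //; apply: sub_mem; rewrite -Ey.
Qed.

Lemma two_letters_adjacent y : two_letters y ->
  exists u b a w, b != a /\ y = u ++ b :: a :: w.
Proof.
elim: y => [|c y IH]; first by case=> a [b [Ha]].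
case: y IH => [|d y] IH.
  by case=> a [b []]; rewrite !inE => /eqP -> /eqP ->; rewrite eqxx.
case: (eqVneq c d) => [Ecd|Hcd]; last by move=> _; exists [::], c, d, y.
subst d => [[a [b [Ha Hb Hab]]]].
have shrink e : e \in [:: c, c & y] -> e \in c :: y.
  by rewrite inE; case/orP => // /eqP ->; rewrite inE eqxx.
have [|u [b' [a' [w [Hba ->]]]]] := IH; first by exists a, b; split => //; apply: shrink.
by exists (c :: u), b', a', w.
Qed.

(* A duplication-only descendant y of x extends, by duplications, to a string
   that is also in D^{*,1}(x): duplicate both letters of an adjacent pair b a
   and turn the second copy of a into b, which is itself a duplication of b. *)
Lemma Dstar_extend_Dstar1 x y : two_letters x -> Dstar x y ->
  exists2 z, Dstar1 x z & Dstar y z.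
Proof.
move=> Hx Hxy.
have [u [b [a [w [Hba Ey]]]]] := two_letters_adjacent (two_letters_Dstar Hxy Hx).
exists (u ++ b :: b :: a :: w); last first.
  by apply: Dstar_step (Dstar_refl _) _; exists u, [:: b], (a :: w); rewrite Ey.
exists (u ++ b :: a :: a :: w), (u ++ b :: b :: a :: w); split; last split.
- by apply: Dstar_step Hxy _; exists (u ++ [:: b]), [:: a], w; rewrite Ey -!catA.
- by exists (u ++ [:: b]), (a :: w), a, b; rewrite eq_sym -!catA.
- exact: Dstar_refl.
Qed.

Lemma nth_before_window (x0 : T) U V W Z p : p < size U ->
  nth x0 (U ++ V ++ W) p = nth x0 (U ++ Z ++ W) p.
Proof. by move=> H; rewrite !nth_cat H. Qed.

Lemma nth_after_window (x0 : T) U V W Z p : size U + size V <= p ->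
  nth x0 (U ++ V ++ W) p = nth x0 (U ++ Z ++ W) (size U + size Z + (p - size U - size V)).
Proof.
move=> H; set k := p - size U - size V.
have E : p = size (U ++ V) + k by rewrite size_cat /k; lia.
by rewrite {1}E catA nth_catR catA -size_cat nth_catR.
Qed.

Lemma nth_outside_window (x0 : T) U V W Z p : size V = size Z ->
  p < size U \/ size U + size V <= p ->
  nth x0 (U ++ V ++ W) p = nth x0 (U ++ Z ++ W) p.
Proof.
move=> HVZ [Hp|Hp]; first exact: nth_before_window.
by rewrite (@nth_after_window _ U V W Z) //; congr nth; lia.
Qed.

End Strings.

Lemma window (q L : nat) (x y r : seq 'I_q) : L_prop L ->
  irreducible x -> 1 < size x -> Dstar_le1 x y -> is_root r y ->
  exists U V W Z, [/\ r = U ++ Z ++ W, x = U ++ V ++ W, size V <= L & size Z <= L].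
Proof.
move=> HL Hirr Hsx Hxy [Hr Hry].
have Hxx : is_root x x by split => //; apply: Dstar_refl.
have [z Hxz Hrz] : exists2 z, Dstar1 x z & is_root r z.
  case: Hxy => [Hxy|Hxy]; last by exists y.
  have [z Hxz Hyz] := Dstar_extend_Dstar1 (irreducible_two_letters Hirr Hsx) Hxy.
  by exists z => //; split => //; apply: Dstar_trans Hry Hyz.
have [U [V [W [Z [Er [Ex [HV HZ]]]]]]] := HL _ _ _ Hxz _ _ Hxx Hrz.
by exists U, V, W, Z.
Qed.

Section BlockArithmetic.
Variables (m l : nat).
Hypothesis Hl : 0 < l.
Hypothesis Hlm : l < m.

Lemma period_decomp K p : 0 < K -> exists i r, p = i * K + r /\ r < K.
Proof. by move=> HK; exists (p %/ K), (p %% K); rewrite -divn_eq ltn_pmod. Qed.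

Lemma lt_mulK a b K : a * K < b * K -> a < b.
Proof. by rewrite ltn_mul2r => /andP []. Qed.

Lemma mod_period_eq i j K a b : i * K + a = j * K + b -> a < K -> b < K -> a = b.
Proof.
move=> E Ha Hb; have := congr1 (fun z => z %% K) E => /=.
by rewrite !modnMDl !modn_small.
Qed.

(* The first block that does not end before position s. *)
Definition first_block s := if s %% (m + l) < m then s %/ (m + l) else (s %/ (m + l)).+1.

Lemma first_block_bound s e k i p : s <= p -> p < e -> i * (m + l) <= p ->
  p < i * (m + l) + m -> e + m <= s + k * (m + l) ->
  first_block s <= i < first_block s + k.
Proof.
move=> H1 H2 H3 H4 H5.
have HK : 0 < m + l by lia.
have Ediv := divn_eq s (m + l); have Hr := ltn_pmod s HK.
rewrite /first_block; set i0 := s %/ (m + l) in Ediv *; set r := s %% (m + l) in Ediv Hr *.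
case: ifP => Hrm; apply/andP; split.
- rewrite -ltnS; apply: (@lt_mulK _ _ (m + l)); rewrite mulSn; lia.
- apply: (@lt_mulK _ _ (m + l)); rewrite mulnDl; lia.
- apply: (@lt_mulK _ _ (m + l)); lia.
- apply: (@lt_mulK _ _ (m + l)); rewrite mulnDl mulSn; lia.
Qed.

Lemma separator_inside s e N : s + m + 2 * l <= e + 1 -> e <= N * (m + l) - l ->
  exists i, [/\ i.+1 < N, s <= i * (m + l) + m & i * (m + l) + m + l <= e].
Proof.
move=> H1 H2.
have [i0 [r [Es Hr]]] : exists i r, s = i * (m + l) + r /\ r < m + l by apply: period_decomp; lia.
case: (leqP r m) => Hrm.
- exists i0; split; [|lia|lia].
  apply: (@lt_mulK _ _ (m + l)); rewrite mulSn; lia.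
- exists i0.+1; split; [|rewrite mulSn; lia|rewrite mulSn; lia].
  apply: (@lt_mulK _ _ (m + l)); rewrite !mulSn; lia.
Qed.

End BlockArithmetic.

Section Blockwords.
Variables (T : eqType) (x0 : T) (sigma : seq T) (m l : nat).
Hypothesis Hsl : size sigma = l.

Lemma concat_sep_layout (bs : seq (seq T)) : all (fun b => size b == m) bs -> 0 < size bs ->
  [/\ size (concat_sep sigma bs) = size bs * (m + l) - l,
      forall i j, i < size bs -> j < m ->
        nth x0 (concat_sep sigma bs) (i * (m + l) + j) = nth x0 (nth [::] bs i) j
    & forall i j, i.+1 < size bs -> j < l ->
        nth x0 (concat_sep sigma bs) (i * (m + l) + m + j) = nth x0 sigma j].
Proof.
elim: bs => [|b bs IH] // /andP [/eqP Hb Hall] _.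
case: bs IH Hall => [|b' bs] IH Hall.
  by rewrite /= cats0; split => //; [rewrite Hb; lia | case].
have [IH1 IH2 IH3] := IH Hall isT.
have -> : concat_sep sigma [:: b, b' & bs] = b ++ sigma ++ concat_sep sigma (b' :: bs).
  by rewrite /= -catA.
split.
- rewrite size_cat size_cat IH1 Hb Hsl /=; have : 0 < size bs + 1 by lia. nia.
- case=> [|i] j Hi Hj; first by rewrite mul0n add0n nth_cat Hb Hj.
  have -> : i.+1 * (m + l) + j = size b + (size sigma + (i * (m + l) + j)).
    rewrite Hb Hsl; nia.
  by rewrite !nth_catR IH2.
- case=> [|i] j Hi Hj.
    by rewrite mul0n add0n -Hb nth_catR nth_cat Hsl Hj.
  have -> : i.+1 * (m + l) + m + j = size b + (size sigma + (i * (m + l) + m + j)).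
    rewrite Hb Hsl; nia.
  by rewrite !nth_catR IH3.
Qed.

Definition blockword (x : seq T) (bs : seq (seq T)) (N : nat) :=
  [/\ x = concat_sep sigma bs, size bs = N, all (fun b => size b == m) bs &
      forall b, b \in bs -> irreducible (sigma ++ b ++ sigma) /\ occ sigma (sigma ++ b ++ sigma) = 2].

Lemma sigma_only_at_ends b o : size b = m -> occ sigma (sigma ++ b ++ sigma) = 2 ->
  o <= l + m -> o != 0 -> o != l + m ->
  ~ (forall k, k < l -> nth x0 (sigma ++ b ++ sigma) (o + k) = nth x0 sigma k).
Proof.
move=> Hb Hocc Ho1 Ho2 Ho3 Hn.
set S := sigma ++ b ++ sigma.
have HS : size S = l + m + l by rewrite /S !size_cat Hsl Hb; lia.
set P := fun i => take (size sigma) (drop i S) == sigma.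
have P0 : P 0 by rewrite /P drop0 /S (@take_size_cat _ (size sigma)).
have Plm : P (l + m).
  rewrite /P /S catA (@drop_size_cat _ (l + m)) ?take_size // size_cat Hsl Hb; lia.
have Po : P o.
  by rewrite /P; apply/eqP; apply: (@take_drop_nth _ x0); rewrite ?HS Hsl //; lia.
move: Hocc; rewrite /occ -/S -/P HS Hsl.
have -> : l + m + l - l = l + m by lia.
rewrite -size_filter => Hc.
have : size [:: 0; o; l + m] <= size (filter P (iota 0 (l + m).+1)).
  apply: uniq_leq_size.
    rewrite /= !inE negb_or eq_sym Ho2 /= eq_sym Ho3 /=; apply/eqP; lia.
  move=> z; rewrite !inE mem_filter mem_iota => /or3P [] /eqP ->.
  - by rewrite P0; lia.
  - by rewrite Po; lia.
  - by rewrite Plm; lia.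
by rewrite Hc.
Qed.

Section OneBlockword.
Variables (x : seq T) (bs : seq (seq T)) (N : nat).
Hypothesis Hx : blockword x bs N.
Hypothesis HN : 0 < N.

Lemma blockword_layout :
  [/\ size x = N * (m + l) - l,
      forall i j, i < N -> j < m -> nth x0 x (i * (m + l) + j) = nth x0 (nth [::] bs i) j
    & forall i j, i.+1 < N -> j < l -> nth x0 x (i * (m + l) + m + j) = nth x0 sigma j].
Proof.
case: Hx => -> Hs Hall _; rewrite -Hs.
by apply: concat_sep_layout => //; rewrite Hs.
Qed.

Lemma blockword_block i : i < N ->
  [/\ size (nth [::] bs i) = m, irreducible (sigma ++ nth [::] bs i ++ sigma)
    & occ sigma (sigma ++ nth [::] bs i ++ sigma) = 2].
Proof.
case: Hx => _ Hs Hall Hprop Hi; have Hbi : nth [::] bs i \in bs by rewrite mem_nth ?Hs.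
by have [? ?] := Hprop _ Hbi; split => //; apply/eqP; apply: (allP Hall).
Qed.

Lemma blockword_local i p : i < N -> p < size x -> i * (m + l) <= p + l ->
  p + l < i * (m + l) + m + 2 * l ->
  nth x0 x p = nth x0 (sigma ++ nth [::] bs i ++ sigma) (p + l - i * (m + l)).
Proof.
have [Hsz Hblk Hsep] := blockword_layout.
move=> Hi Hp H1 H2; have [Hb _ _] := blockword_block Hi.
case: (ltnP p (i * (m + l))) => H3.
  case: i Hi H1 H2 H3 Hb => [|i] Hi H1 H2 H3 Hb; first lia.
  have E : p = i * (m + l) + m + (p + l - i.+1 * (m + l)) by nia.
  rewrite {1}E Hsep; last 2 first.
  - rewrite Hsz in Hp; nia.
  - nia.
  rewrite nth_cat Hsl ifT //; nia.
case: (ltnP p (i * (m + l) + m)) => H4.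
  have E : p = i * (m + l) + (p - i * (m + l)) by lia.
  rewrite {1}E Hblk; [|lia|lia].
  have -> : p + l - i * (m + l) = size sigma + (p - i * (m + l)) by lia.
  by rewrite nth_catR nth_cat Hb ifT //; lia.
have E : p = i * (m + l) + m + (p - i * (m + l) - m) by lia.
rewrite {1}E Hsep; last 2 first.
- rewrite Hsz in Hp; nia.
- lia.
have -> : p + l - i * (m + l) = size sigma + (size (nth [::] bs i) + (p - i * (m + l) - m)).
  rewrite Hsl Hb; lia.
by rewrite !nth_catR.
Qed.

Hypothesis Hl5 : 5 <= l.
Hypothesis Hlm : l < m.

Lemma blockword_local_window s d : s + d <= size x -> 0 < d <= 6 ->
  exists i o, [/\ i < N, o + d <= l + m + l &
    forall k, k < d -> nth x0 x (s + k) = nth x0 (sigma ++ nth [::] bs i ++ sigma) (o + k)].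
Proof.
move=> Hsd Hd; have [Hsz _ _] := blockword_layout.
have [i0 [r [Es Hr]]] : exists i r, s = i * (m + l) + r /\ r < m + l by apply: period_decomp; lia.
case: (ltnP r m) => Hrm.
- have Hi0 : i0 < N by rewrite Hsz in Hsd; nia.
  exists i0, (r + l); split; [done|lia|] => k Hk.
  rewrite (blockword_local Hi0); [|lia|nia|nia].
  by congr nth; lia.
- have Hi0 : i0.+1 < N by rewrite Hsz in Hsd; nia.
  exists i0.+1, (r - m); split; [done|lia|] => k Hk.
  rewrite (blockword_local Hi0); [|lia|nia|nia].
  by congr nth; nia.
Qed.

Lemma sigma_at_separator p : p + l <= size x ->
  (forall k, k < l -> nth x0 x (p + k) = nth x0 sigma k) ->
  exists i, p = i * (m + l) + m.
Proof.
move=> Hp Hk; have [Hsz _ _] := blockword_layout.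
have [i0 [r [Ep Hr]]] : exists i r, p = i * (m + l) + r /\ r < m + l by apply: period_decomp; lia.
case: (ltngtP r m) => Hrm; last by exists i0; lia.
- have Hi0 : i0 < N by rewrite Hsz in Hp; nia.
  have [Hb _ Hocc] := blockword_block Hi0.
  exfalso; apply: (sigma_only_at_ends (o := r + l) Hb Hocc); [lia|lia|lia|] => k Hkl.
  rewrite -Hk // (blockword_local Hi0); [|lia|nia|nia].
  by congr nth; lia.
- have Hi0 : i0.+1 < N by rewrite Hsz in Hp; nia.
  have [Hb _ Hocc] := blockword_block Hi0.
  exfalso; apply: (sigma_only_at_ends (o := r - m) Hb Hocc); [lia|lia|lia|] => k Hkl.
  rewrite -Hk // (blockword_local Hi0); [|lia|nia|nia].
  by congr nth; nia.
Qed.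

(* A blockword is irreducible: a square of length <= 6 would lie inside some
   irreducible σ b_i σ. *)
Lemma blockword_irreducible : irreducible x.
Proof.
move=> [u [a [w [Ha Ex]]]].
have Hsx : size u + size (a ++ a) <= size x by rewrite Ex !size_cat; lia.
have Hd : 0 < size (a ++ a) <= 6 by rewrite size_cat; lia.
have [i [o [Hi Ho Hloc]]] := blockword_local_window Hsx Hd.
have [Hb Hirr _] := blockword_block Hi.
apply: Hirr; exists (take o (sigma ++ nth [::] bs i ++ sigma)), a,
  (drop (o + size (a ++ a)) (sigma ++ nth [::] bs i ++ sigma)); split => //.
have := @split_at_nth _ x0 (sigma ++ nth [::] bs i ++ sigma) (a ++ a) o; rewrite -catA; apply.
  by rewrite !size_cat Hsl Hb -size_cat; lia.
by move=> k Hk; rewrite -Hloc // Ex nth_catR catA nth_cat Hk.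
Qed.

End OneBlockword.

End Blockwords.


Section TwoBlockwords.
Variables (T : eqType) (x0 : T) (sigma : seq T) (m l : nat).
Hypothesis Hsl : size sigma = l.
Hypothesis Hl5 : 5 <= l.
Hypothesis Hlm : l < m.
Let Hl : 0 < l := ltn_trans (isT : 0 < 4) Hl5.
Variables (x1 x2 : seq T) (bs1 bs2 : seq (seq T)) (N : nat).
Hypothesis Hx1 : blockword sigma m x1 bs1 N.
Hypothesis Hx2 : blockword sigma m x2 bs2 N.
Hypothesis HN : 0 < N.
Variables (r U1 V1 Z1 W1 U2 V2 Z2 W2 : seq T).
Hypothesis Er1 : r = U1 ++ Z1 ++ W1.
Hypothesis Ex1 : x1 = U1 ++ V1 ++ W1.
Hypothesis Er2 : r = U2 ++ Z2 ++ W2.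
Hypothesis Ex2 : x2 = U2 ++ V2 ++ W2.
Hypothesis HV1 : size V1 < m.
Hypothesis HZ1 : size Z1 < m.
Hypothesis HV2 : size V2 < m.
Hypothesis HZ2 : size Z2 < m.
Hypothesis HU12 : size U1 <= size U2.

Lemma same_size : size x1 = size x2.
Proof.
by have [-> _ _] := blockword_layout x0 Hsl Hx1 HN; have [-> _ _] := blockword_layout x0 Hsl Hx2 HN.
Qed.

Lemma same_length_change : size V1 + size Z2 = size V2 + size Z1.
Proof.
have := same_size; rewrite Ex1 Ex2 !size_cat.
have := congr1 size (etrans (esym Er1) Er2); rewrite !size_cat; lia.
Qed.

Lemma differ_between_windows p : nth x0 x1 p != nth x0 x2 p ->
  size U1 <= p < maxn (size U1 + size V1) (size U2 + size V2).
Proof.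
move=> Hne; have HVZ := same_length_change.
case: (ltnP p (size U1)) => Hp.
  move/eqP: Hne; case.
  by rewrite Ex1 Ex2 (@nth_before_window _ _ U1 V1 W1 Z1) // (@nth_before_window _ _ U2 V2 W2 Z2);
     [rewrite -Er1 -Er2|lia].
case: (ltnP p (maxn (size U1 + size V1) (size U2 + size V2))) => Hp'; first by apply/andP.
move: Hp'; rewrite geq_max => /andP [Hp1 Hp2].
move/eqP: Hne; case.
rewrite Ex1 Ex2 (@nth_after_window _ _ U1 V1 W1 Z1) // (@nth_after_window _ _ U2 V2 W2 Z2) //.
by rewrite -Er1 -Er2; congr nth; lia.
Qed.

Lemma differ_in_windows p : size V1 = size Z1 -> nth x0 x1 p != nth x0 x2 p ->
  size U1 <= p < size U1 + size V1 \/ size U2 <= p < size U2 + size V2.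
Proof.
move=> HVZ1 Hne; have HVZ2 : size V2 = size Z2 by have := same_length_change; lia.
apply: NNPP => Hout; move/eqP: Hne; apply.
have H1 : p < size U1 \/ size U1 + size V1 <= p by lia.
have H2 : p < size U2 \/ size U2 + size V2 <= p by lia.
rewrite Ex1 Ex2 (@nth_outside_window _ _ U1 V1 W1 Z1) // (@nth_outside_window _ _ U2 V2 W2 Z2) //.
by rewrite -Er1 -Er2.
Qed.

(* If a whole separator of x2 lies between the windows, it is copied into r
   and then into x1, where it must again be a separator; hence the first
   window preserves length (up to a multiple of m + l, but |V1|,|Z1| < m). *)
Lemma far_windows_same_length : size U1 + size Z1 + m + 2 * l <= size U2 + 1 ->
  size V1 = size Z1.
Proof.
move=> Hfar.
have [Hsz2 _ Hsep2] := blockword_layout x0 Hsl Hx2 HN.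
have Hsize2 : size x2 = size U2 + size V2 + size W2 by rewrite Ex2 !size_cat; lia.
have HU2 : size U2 <= N * (m + l) - l by rewrite -Hsz2 Hsize2; lia.
have [i' [Hi' Hs1 Hs2]] := separator_inside Hl Hlm Hfar HU2.
set j0 := i' * (m + l) + m in Hs1 Hs2.
have [i'' Hj1] : exists i'', j0 + size V1 - size Z1 = i'' * (m + l) + m.
  apply: (@sigma_at_separator _ x0 _ _ _ Hsl _ _ _ Hx1 HN Hl5 Hlm).
    by have := same_length_change; rewrite same_size Hsize2; lia.
  move=> k Hk.
  rewrite Ex1 (@nth_after_window _ _ U1 V1 W1 Z1); last lia.
  rewrite -Er1 Er2.
  have -> : size U1 + size Z1 + (j0 + size V1 - size Z1 + k - size U1 - size V1) = j0 + k by lia.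
  by rewrite -(@nth_before_window _ _ U2 V2 W2 Z2) -?Ex2 ?Hsep2 //; lia.
apply: (@mod_period_eq i' i'' (m + l)); lia.
Qed.

Lemma differing_block_position i : i < N -> nth [::] bs1 i != nth [::] bs2 i ->
  exists2 j, j < m & nth x0 x1 (i * (m + l) + j) != nth x0 x2 (i * (m + l) + j).
Proof.
move=> Hi Hne.
have [_ Hblk1 _] := blockword_layout x0 Hsl Hx1 HN.
have [_ Hblk2 _] := blockword_layout x0 Hsl Hx2 HN.
have [Hb1 _ _] := blockword_block Hx1 Hi.
have [Hb2 _ _] := blockword_block Hx2 Hi.
apply: NNPP => Hno; move/eqP: Hne; apply; apply: (@eq_from_nth _ x0); first by rewrite Hb1 Hb2.
rewrite Hb1 => j Hj; rewrite -Hblk1 // -Hblk2 //.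
by apply/eqP; apply: contraT => Hc; exfalso; apply: Hno; exists j.
Qed.

Lemma few_differing_blocks : exists a b, forall i, i < N -> nth [::] bs1 i != nth [::] bs2 i ->
  i \in [:: a; a.+1; b; b.+1].
Proof.
case: (ltnP (size U2 + 1) (size U1 + size Z1 + m + 2 * l)) => Hcase.
- exists (first_block m l (size U1)), (first_block m l (size U1)).+2 => i Hi Hne.
  have [j Hj /differ_between_windows /andP [Hd1 Hd2]] := differing_block_position Hi Hne.
  have : first_block m l (size U1) <= i < first_block m l (size U1) + 4.
    by apply: (first_block_bound Hl Hlm Hd1 Hd2); lia.
  by rewrite !inE; lia.
- have HVZ1 := far_windows_same_length Hcase.
  exists (first_block m l (size U1)), (first_block m l (size U2)) => i Hi Hne.
  have [j Hj /(differ_in_windows HVZ1) [/andP [Hd1 Hd2]|/andP [Hd1 Hd2]]] :=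
    differing_block_position Hi Hne.
  + have : first_block m l (size U1) <= i < first_block m l (size U1) + 2.
      by apply: (first_block_bound Hl Hlm Hd1 Hd2); lia.
    by rewrite !inE; lia.
  + have : first_block m l (size U2) <= i < first_block m l (size U2) + 2.
      by apply: (first_block_bound Hl Hlm Hd1 Hd2); lia.
    by rewrite !inE; lia.
Qed.

End TwoBlockwords.

Lemma common_root_few_differing_blocks q (x0 : 'I_q) (sigma : seq 'I_q) (m l L N : nat)
    (x1 x2 y1 y2 r : seq 'I_q) (bs1 bs2 : seq (seq 'I_q)) :
  size sigma = l -> 5 <= l -> l < m -> L_prop L -> L < m -> 0 < N ->
  blockword sigma m x1 bs1 N -> blockword sigma m x2 bs2 N ->
  Dstar_le1 x1 y1 -> Dstar_le1 x2 y2 -> is_root r y1 -> is_root r y2 ->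
  exists a b, forall i, i < N -> nth [::] bs1 i != nth [::] bs2 i ->
    i \in [:: a; a.+1; b; b.+1].
Proof.
move=> Hsl Hl5 Hlm HL HmL HN Hx1 Hx2 Hy1 Hy2 Hr1 Hr2.
have long x bs : blockword sigma m x bs N -> 1 < size x.
  by move=> Hx; have [-> _ _] := blockword_layout x0 Hsl Hx HN; nia.
have [U1 [V1 [W1 [Z1 [Er1 Ex1 HV1 HZ1]]]]] :=
  window HL (blockword_irreducible x0 Hsl Hx1 HN Hl5 Hlm) (long _ _ Hx1) Hy1 Hr1.
have [U2 [V2 [W2 [Z2 [Er2 Ex2 HV2 HZ2]]]]] :=
  window HL (blockword_irreducible x0 Hsl Hx2 HN Hl5 Hlm) (long _ _ Hx2) Hy2 Hr2.
have Hm (V : seq 'I_q) : size V <= L -> size V < m by move=> HV; apply: leq_ltn_trans HmL.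
case: (leqP (size U1) (size U2)) => HU.
  exact: (few_differing_blocks x0 Hsl Hl5 Hlm Hx1 Hx2 HN Er1 Ex1 Er2 Ex2 (Hm _ HV1) (Hm _ HZ1)
    (Hm _ HV2) (Hm _ HZ2) HU).
have [a [b Hab]] := few_differing_blocks x0 Hsl Hl5 Hlm Hx2 Hx1 HN Er2 Ex2 Er1 Ex1 (Hm _ HV2)
  (Hm _ HZ2) (Hm _ HV1) (Hm _ HZ1) (ltnW HU).
by exists a, b => i Hi Hne; apply: Hab => //; rewrite eq_sym.
Qed.

Section CodeMDS.
Variables (q : nat) (sigma : seq 'I_q) (m : nat) (F : finFieldType) (N : nat).
Variable zeta : F -> m.-tuple 'I_q.

Definition blocks_of (c : 'rV[F]_N) : seq (seq 'I_q) :=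
  [seq tval (zeta (c ord0 i)) | i <- enum 'I_N].

Lemma nth_blocks_of c (i : 'I_N) : nth [::] (blocks_of c) i = zeta (c ord0 i).
Proof. by rewrite /blocks_of (nth_map i) ?size_enum_ord // nth_ord_enum. Qed.

Lemma CMDS_blockword (C : {vspace 'rV[F]_N}) x : (forall a, inB sigma (zeta a)) ->
  CMDS sigma zeta C x -> exists2 c, c \in C & blockword sigma m x (blocks_of c) N.
Proof.
move=> HzB [c Hc Ex]; exists c => //; split => //.
- by rewrite size_map size_enum_ord.
- by apply/allP => b /mapP [i _ ->]; rewrite size_tuple.
- by move=> b /mapP [i _ ->]; exact: HzB.
Qed.

Lemma hamming_le_blocks (c d : 'rV[F]_N) (s : seq nat) : injective zeta ->
  (forall i : 'I_N, nth [::] (blocks_of c) i != nth [::] (blocks_of d) i -> val i \in s) ->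
  hamming c d <= size s.
Proof.
move=> Hzinj Hs; rewrite /hamming cardE -(size_map val); apply: uniq_leq_size.
  by rewrite map_inj_uniq ?enum_uniq //; apply: val_inj.
move=> z /mapP [i]; rewrite mem_enum inE => Hi ->; apply: Hs; rewrite !nth_blocks_of.
by apply: contra Hi => /eqP /val_inj /Hzinj ->.
Qed.

End CodeMDS.

Unset Implicit Arguments. Set Strict Implicit.

Theorem theorem3
  (q : nat) (Hq : 3 <= q) (l m : nat) (Hl : 5 <= l) (Hlm : l < m)
  (L : nat) (HL : is_Lcal L) (HmL : L < m)
  (sigma : seq 'I_q) (Hsl : size sigma = l) (Hsirr : irreducible sigma)
  (t : nat) (Ht : 0 < t) (HM : 2 ^ t <= Mcard sigma m)
  (F : finFieldType) (HF : #|F| = 2 ^ t)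
  (zeta : F -> m.-tuple 'I_q) (Hzinj : injective zeta) (HzB : forall a, inB sigma (zeta a))
  (N : nat) (HN : N = 2 ^ t - 1)
  (C : {vspace 'rV[F]_N}) (HCdim : \dim C = N - 4)
  (HCd : forall c d, c \in C -> d \in C -> c != d -> 5 <= hamming c d)
  (HCd5 : exists c d, [/\ c \in C, d \in C & hamming c d = 5]) :
  (forall x1 x2, CMDS sigma zeta C x1 -> CMDS sigma zeta C x2 -> x1 <> x2 ->
     forall y, ~ (Dstar_le1 x1 y /\ Dstar_le1 x2 y))
  /\
  (forall x1 x2 y1 y2 r, CMDS sigma zeta C x1 -> CMDS sigma zeta C x2 ->
     Dstar_le1 x1 y1 -> Dstar_le1 x2 y2 -> is_root r y1 -> is_root r y2 -> x1 = x2).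
Proof.
have x0 : 'I_q by exists 0; lia.
have HN0 : 0 < N.
  have [c [d [_ _ H5]]] := HCd5.
  have : hamming c d <= N by rewrite /hamming (leq_trans (max_card _)) ?card_ord.
  lia.
have decode x1 x2 y1 y2 r : CMDS sigma zeta C x1 -> CMDS sigma zeta C x2 ->
    Dstar_le1 x1 y1 -> Dstar_le1 x2 y2 -> is_root r y1 -> is_root r y2 -> x1 = x2.
  move=> /(CMDS_blockword HzB) [c1 Hc1 Hx1] /(CMDS_blockword HzB) [c2 Hc2 Hx2] Hy1 Hy2 Hr1 Hr2.
  have [a [b Hab]] := common_root_few_differing_blocks x0 Hsl Hl Hlm HL.1 HmL HN0
    Hx1 Hx2 Hy1 Hy2 Hr1 Hr2.
  suff Ec : c1 = c2 by case: Hx1 => ->; case: Hx2 => ->; rewrite Ec.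
  apply/eqP; apply: contraT => /(HCd _ _ Hc1 Hc2) Hfar.
  have Hnear : hamming c1 c2 <= size [:: a; a.+1; b; b.+1].
    by apply: (hamming_le_blocks Hzinj) => i; apply: Hab (ltn_ord i).
  by move: Hnear; rewrite leqNgt Hfar.
split; last exact: decode.
move=> x1 x2 H1 H2 Hne y [Hy1 Hy2].
have [r Hr] := root_exists y.
exact: Hne (decode _ _ _ _ _ H1 H2 Hy1 Hy2 Hr Hr).
Qed.
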